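(* There exist an environment $E$ and a total preorder $\succeq$ on $\Pi^E$ such that $\succeq\in\mathrm{Ord}_{\mathrm{RM}}(E)\cap\mathrm{Ord}_{\mathrm{ONMR}}(E)\cap\mathrm{Ord}_{\mathrm{LTL}}(E)$ but $\succeq\notin\mathrm{Ord}_{\mathrm{MR}}(E)\cup\mathrm{Ord}_{\mathrm{RRL}}(E)$.
   Context: An environment is a tuple $E=(\mathcal S,\mathcal A,\mathcal T,\mathcal I)$ where $\mathcal S,\mathcal A$ are finite nonempty sets, $\mathcal T:\mathcal S\times\mathcal A\to\Delta(\mathcal S)$ and $\mathcal I\in\Delta(\mathcal S)$. A policy is a map $\pi:\mathcal S\to\Delta(\mathcal A)$ (stationary, possibly stochastic); $\Pi^E$ denotes the set of all policies. A trajectory $\xi=(s_0,a_0,s_1,a_1,\dots)\in\Xi:=\mathcal S\times(\mathcal A\times\mathcal S)^\omega$ is generated under $\pi$ by $s_0\sim\mathcal I$, $a_t\sim\pi(s_t)$, $s_{t+1}\sim\mathcal T(s_t,a_t)$; $\mathbb E^\pi_\xi$ denotes expectation under this distribution. An objective-specification formalism $X$ assigns to each environment $E$ a set of objective specifications, each inducing a total preorder $\succeq$ on $\Pi^E$; $\mathrm{Ord}_X(E)$ is the set of total preorders so induced. A specification defining a scalar $J:\Pi^E\to\mathbb R$ induces $\pi_1\succeq\pi_2\iff J(\pi_1)\ge J(\pi_2)$. MR: specification $(\mathcal R,\gamma)$, $\mathcal R:\mathcal S\times\mathcal A\times\mathcal S\to\mathbb R$, $\gamma\in[0,1)$, $J(\pi)=\mathbb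 E^\pi_\xi[\sum_{t=0}^\infty\gamma^t\mathcal R(s_t,a_t,s_{t+1})]$. RRL: specification $(\mathcal R,\alpha,F,\gamma)$ with $\mathcal R:\mathcal S\times\mathcal A\times\mathcal S\to\mathbb R$, $\alpha\in\mathbb R$, $F:\Delta(\mathcal A)\to\mathbb R$, $\gamma\in[0,1)$; $J(\pi)=\mathbb E^\pi_\xi[\sum_{t=0}^\infty\gamma^t(\mathcal R(s_t,a_t,s_{t+1})-\alpha F(\pi(s_t)))]$. ONMR: specification $(\mathcal R,f,\gamma)$ with $\mathcal R:\mathcal S\times\mathcal A\times\mathcal S\to\mathbb R$, $f:\mathbb R\to\mathbb R$, $\gamma\in[0,1)$; $J(\pi)=f\big(\mathbb E^\pi_\xi[\sum_{t=0}^\infty\gamma^t\mathcal R(s_t,a_t,s_{t+1})]\big)$. RM (reward machines): specification $(U,u_0,\delta_U,\delta_{\mathcal R},\gamma)$ with $U$ a finite set, $u_0\in U$, $\delta_U:U\times\mathcal S\times\mathcal A\times\mathcal S\to U$, $\delta_{\mathcal R}:U\times U\to(\mathcal S\times\mathcal A\times\mathcal S\to\mathbb R)$, $\gamma\in[0,1)$; along a trajectory $u_{t+1}=\delta_U(u_t,s_t,a_t,s_{t+1})$ and $J(\pi)=\mathbb E^\pi_\xi[\sum_{t=0}^\infty\gamma^t\,\delta_{\mathcal R}(u_t,u_{t+1})(s_t,a_t,s_{t+1})]$. LTL: specification $(\varphi)$ with $\varphi$ a linear temporal logic formula whose atomic propositions are the transitions $(s,a,s')\in\mathcal S\times\mathcal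 A\times\mathcal S$, built with $\neg,\lor,\land,\to$ and the temporal operators $\bigcirc$ (next), $\square$ (always), $\lozenge$ (eventually), $\mathcal U$ (until). Semantics on a trajectory $\xi$ at time $t$: an atomic proposition $(s,a,s')$ holds iff $(s_t,a_t,s_{t+1})=(s,a,s')$; $\bigcirc\psi$ holds iff $\psi$ holds at $t+1$; $\square\psi$ iff $\psi$ holds at every $t'\ge t$; $\lozenge\psi$ iff $\psi$ holds at some $t'\ge t$; $\psi\,\mathcal U\,\chi$ iff there is $t'\ge t$ with $\chi$ holding at $t'$ and $\psi$ holding at every $t''$ with $t\le t''<t'$; Boolean connectives as usual. $\varphi(\xi)=1$ if $\varphi$ holds at time $0$ and $0$ otherwise; $J(\pi)=\mathbb E^\pi_\xi[\varphi(\xi)]$. *)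

From HB Require Import structures.
From mathcomp Require Import all_boot all_order all_algebra.
From mathcomp Require Import all_classical all_reals all_analysis.
From mathcomp Require Import Rstruct Rstruct_topology.

Set Implicit Arguments.
Unset Strict Implicit.
Unset Printing Implicit Defensive.

Import Order.TTheory GRing.Theory Num.Theory.
Local Open Scope classical_set_scope.
Local Open Scope ring_scope.

Notation R := Rdefinitions.R.

Definition is_dist (T : finType) (d : {ffun T -> R}) : Prop :=
  (forall x, 0 <= d x) /\ \sum_(x : T) d x = 1.

Record dist (T : finType) := Dist {
  dval :> {ffun T -> R};
  dval_dist : is_dist dval }.

Record env := Env {
  st : finType;
  act : finType;
  st_nonempty : (0 < #|st|)%N;
  act_nonempty : (0 < #|act|)%N;
  trans : st -> act -> dist st;
  init : dist st }.

Definition policy (E : env) := st E -> dist (act E).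

Section Env.
Variable E : env.
Local Notation S := (st E).
Local Notation A := (act E).
Local Notation T := (@trans E).
Local Notation I := (@init E).

(** A finite trajectory prefix s_0 a_0 s_1 a_1 ... s_n a_n (n transitions). *)
Definition path (n : nat) : finType :=
  ({ffun 'I_n.+1 -> S} * {ffun 'I_n.+1 -> A})%type.

Definition pst n (p : path n) (k : nat) : S := p.1 (inord k).
Definition pact n (p : path n) (k : nat) : A := p.2 (inord k).

Definition path_prob (pi : policy E) n (p : path n) : R :=
  I (pst p 0) *
  (\prod_(i < n.+1) pi (pst p i) (pact p i)) *
  (\prod_(i < n) T (pst p i) (pact p i) (pst p i.+1)).

(** Expected discounted sum E[ sum_t gamma^t r_t ] where the reward at time t
    is r t p s' with p = s_0 a_0 ... s_t a_t the prefix and s' = s_{t+1}.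
    (E[sum_t gamma^t r_t] = sum_t gamma^t E[r_t] for bounded rewards.) *)
Definition exp_disc (pi : policy E) (gamma : R)
    (r : forall t : nat, path t -> S -> R) : R :=
  limn (fun N => \sum_(0 <= t < N)
    gamma ^+ t * \sum_(p : path t) path_prob pi p *
       \sum_(s' : S) T (pst p t) (pact p t) s' * r t p s').

Definition J_MR (Rw : S -> A -> S -> R) (gamma : R) (pi : policy E) : R :=
  exp_disc pi gamma (fun t p s' => Rw (pst p t) (pact p t) s').

Definition J_RRL (Rw : S -> A -> S -> R) (alpha : R) (F : dist A -> R)
    (gamma : R) (pi : policy E) : R :=
  exp_disc pi gamma
    (fun t p s' => Rw (pst p t) (pact p t) s' - alpha * F (pi (pst p t))).

Definition J_ONMR (Rw : S -> A -> S -> R) (f : R -> R) (gamma : R)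
    (pi : policy E) : R := f (J_MR Rw gamma pi).

Fixpoint rm_state (U : finType) (u0 : U) (dU : U -> S -> A -> S -> U)
    n (p : path n) (k : nat) : U :=
  match k with
  | 0 => u0
  | k'.+1 => dU (rm_state u0 dU p k') (pst p k') (pact p k') (pst p k)
  end.

Definition J_RM (U : finType) (u0 : U) (dU : U -> S -> A -> S -> U)
    (dR : U -> U -> (S -> A -> S -> R)) (gamma : R) (pi : policy E) : R :=
  exp_disc pi gamma (fun t p s' =>
    let ut := rm_state u0 dU p t in
    dR ut (dU ut (pst p t) (pact p t) s') (pst p t) (pact p t) s').

Record traj := Traj { tst : nat -> S; tact : nat -> A }.

Inductive ltl :=
  | LAtom of S & A & S
  | LNot of ltl
  | LOr of ltl & ltl
  | LAnd of ltl & ltl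
  | LImp of ltl & ltl
  | LNext of ltl
  | LAlways of ltl
  | LEventually of ltl
  | LUntil of ltl & ltl.

Fixpoint ltl_holds (phi : ltl) (xi : traj) (t : nat) : Prop :=
  match phi with
  | LAtom s a s' => tst xi t = s /\ tact xi t = a /\ tst xi t.+1 = s'
  | LNot psi => ~ ltl_holds psi xi t
  | LOr psi chi => ltl_holds psi xi t \/ ltl_holds chi xi t
  | LAnd psi chi => ltl_holds psi xi t /\ ltl_holds chi xi t
  | LImp psi chi => ltl_holds psi xi t -> ltl_holds chi xi t
  | LNext psi => ltl_holds psi xi t.+1
  | LAlways psi => forall t', (t <= t')%N -> ltl_holds psi xi t'
  | LEventually psi => exists t', (t <= t')%N /\ ltl_holds psi xi t'
  | LUntil psi chi => exists t', (t <= t')%N /\ ltl_holds chi xi t' /\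
      forall t'', (t <= t'')%N -> (t'' < t')%N -> ltl_holds psi xi t''
  end.

Definition cyl n (p : path n) : set traj :=
  [set xi | forall k, (k <= n)%N -> tst xi k = pst p k /\ tact xi k = pact p k].

Definition ocyl (c : option {n : nat & path n}) : set traj :=
  if c is Some (existT n p) then cyl p else set0.

Definition ocyl_prob (pi : policy E) (c : option {n : nat & path n}) : R :=
  if c is Some (existT n p) then path_prob pi p else 0.

(** The trajectory distribution of pi, evaluated on a set B of trajectories
    via the Caratheodory outer measure generated by the cylinder
    probabilities; on measurable sets (in particular on LTL events) this is
    the probability of B under the trajectory distribution. *)
Definition traj_prob (pi : policy E) (B : set traj) : \bar R :=
  ereal_inf [set (\sum_(k <oo) (ocyl_prob pi (c k))%:E)%E
            | c in [set c : nat -> option {n : nat & path n} |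
                    B `<=` \bigcup_k ocyl (c k)]].

Definition J_LTL (phi : ltl) (pi : policy E) : R :=
  fine (traj_prob pi [set xi | ltl_holds phi xi 0]).

Definition induced (J : policy E -> R) (rel : policy E -> policy E -> Prop) : Prop :=
  forall p1 p2, rel p1 p2 <-> J p2 <= J p1.

Definition total_preorder (rel : policy E -> policy E -> Prop) : Prop :=
  (forall p, rel p p) /\
  (forall p1 p2 p3, rel p1 p2 -> rel p2 p3 -> rel p1 p3) /\
  (forall p1 p2, rel p1 p2 \/ rel p2 p1).

Definition discount (gamma : R) : Prop := 0 <= gamma < 1.

Definition in_Ord_MR rel : Prop :=
  exists (Rw : S -> A -> S -> R) (gamma : R),
    discount gamma /\ induced (J_MR Rw gamma) rel.

Definition in_Ord_RRL rel : Prop :=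
  exists (Rw : S -> A -> S -> R) (alpha : R) (F : dist A -> R) (gamma : R),
    discount gamma /\ induced (J_RRL Rw alpha F gamma) rel.

Definition in_Ord_ONMR rel : Prop :=
  exists (Rw : S -> A -> S -> R) (f : R -> R) (gamma : R),
    discount gamma /\ induced (J_ONMR Rw f gamma) rel.

Definition in_Ord_RM rel : Prop :=
  exists (U : finType) (u0 : U) (dU : U -> S -> A -> S -> U)
         (dR : U -> U -> (S -> A -> S -> R)) (gamma : R),
    discount gamma /\ induced (J_RM u0 dU dR gamma) rel.

Definition in_Ord_LTL rel : Prop :=
  exists phi : ltl, induced (J_LTL phi) rel.

End Env.

From Pilot Require Import Defs.
From HB Require Import structures.
From mathcomp Require Import all_boot all_order all_algebra.
From mathcomp Require Import all_classical all_reals all_analysis.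
From mathcomp Require Import Rstruct Rstruct_topology.
From mathcomp Require Import lra ring.

Import Order.TTheory GRing.Theory Num.Theory numFieldNormedType.Exports.
Local Open Scope classical_set_scope.
Local Open Scope ring_scope.

(* The witness is the environment [env0] with boolean states and actions that
   starts in state [false] and then stays in state [true], ordered by
   [J_tf pi = pi true true * pi true false], the probability of playing
   [true] at time 1 and [false] at time 2.  This order is induced by a reward
   machine that remembers [a_1] and pays [~~ a_2] at time 2, by
   [f p = p (1 - p)] applied to the Markovian value [p = pi true true], and by
   the LTL formula [X (true, true, true) /\ X X (true, false, true)].  No RRL
   objective (and a fortiori no MR one) induces it: on [env0] its value is
   [u (pi false) + K * v (pi true)] with [u] and [v] affine in the action
   distribution up to a shared regulariser, so it cannot ignore a segment of
   distributions in state [false] while strictly preferring the midpoint of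
   that segment in state [true].

   For the LTL value, [traj_prob] is the outer measure generated by cylinder
   probabilities.  A cover by four cylinders bounds it from above; the lower
   bound is a compactness argument on the finitely branching tree of
   prefixes. *)

Lemma dist_ge0 {T : finType} (d : dist T) x : 0 <= d x.
Proof. by case: (dval_dist d). Qed.

Lemma dist_sum1 {T : finType} (d : dist T) : \sum_x d x = 1.
Proof. by case: (dval_dist d). Qed.

Lemma dist_le1 {T : finType} (d : dist T) x : d x <= 1.
Proof.
rewrite -(dist_sum1 d) (bigD1 x) //= lerDl.
by apply: sumr_ge0 => y _; exact: dist_ge0.
Qed.

Lemma sum_dist_mulr {T : finType} (d : dist T) (c : R) : \sum_x d x * c = c.
Proof. by rewrite -mulr_suml dist_sum1 mul1r. Qed.

Lemma dist_bool_sum (d : dist bool) : d true + d false = 1.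
Proof. by rewrite -(dist_sum1 d) big_bool. Qed.

Definition point_ffun (T : finType) (x : T) : {ffun T -> R} := [ffun y => (y == x)%:R].

Lemma point_ffun_dist (T : finType) (x : T) : is_dist (point_ffun T x).
Proof.
split=> [y|]; first by rewrite ffunE ler0n.
by rewrite (bigD1 x) //= ffunE eqxx big1 ?addr0 // => y /negbTE yx; rewrite ffunE yx.
Qed.

Definition point_dist (T : finType) (x : T) : dist T := Dist (point_ffun_dist T x).

Lemma point_distE (T : finType) (x y : T) : point_dist T x y = (y == x)%:R.
Proof. by rewrite /= ffunE. Qed.

Definition uniform_ffun : {ffun bool -> R} := [ffun=> 2^-1].

Lemma uniform_ffun_dist : is_dist uniform_ffun.
Proof.
split=> [b|]; first by rewrite ffunE invr_ge0 ler0n.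
by rewrite big_bool /= !ffunE; field.
Qed.

Definition uniform_bool : dist bool := Dist uniform_ffun_dist.

Lemma sum_bool_pair (F : bool * bool -> R) :
  \sum_x F x = F (true, true) + F (true, false) + (F (false, true) + F (false, false)).
Proof.
have -> : F = fun x => F (x.1, x.2) by apply/funext => -[].
by rewrite -(pair_bigA _ (fun s a => F (s, a))) /= !big_bool.
Qed.

Lemma sum_if_unique {T : finType} (P : T -> Prop) (y : T) (X : R) :
  (forall x, P x <-> x = y) -> \sum_x (if `[< P x >] then X else 0) = X.
Proof.
move=> Py; rewrite -big_mkcond (big_pred1 y) // => x /=.
exact/asbool_equiv_eqP/Py/eqP.
Qed.

Lemma nneseries_ge_term (u : nat -> \bar R) k :
  (forall i, 0 <= u i)%E -> (u k <= \sum_(i <oo) u i)%E.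
Proof.
move=> u_ge0; apply: le_trans (nneseries_lim_ge k.+1 (fun i _ _ => u_ge0 i)).
by rewrite big_nat_recr //= leeDr // sume_ge0.
Qed.

Lemma lim_discounted_head_tail (K : realType) (x y gamma : K) : 0 <= gamma < 1 ->
  limn (fun N => \sum_(0 <= t < N) gamma ^+ t * (if t == 0%N then x else y))
  = x + y * (gamma / (1 - gamma)).
Proof.
move=> /andP[g0 g1].
have geo : series (geometric 1 gamma) @ \oo --> 1 / (1 - gamma).
  by apply: cvg_geometric_series; rewrite ger0_norm.
apply: cvg_lim => //.
have -> : x + y * (gamma / (1 - gamma)) = (x - y) + y * (1 / (1 - gamma)).
  by field; rewrite subr_eq0 gt_eqF.
have lim_affine : (fun N => (x - y) + y * series (geometric 1 gamma) N) @ \oo -->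
    (x - y) + y * (1 / (1 - gamma)).
  by apply: cvgD; [exact: cvg_cst | exact: cvgMl_tmp].
apply: cvg_trans lim_affine; apply: near_eq_cvg; near=> N.
have N0 : (0 < N)%N by near: N; exists 1%N.
rewrite -(prednK N0) /series /= !big_nat_recl //= !expr0 !mul1r.
under eq_bigr do rewrite mul1r.
rewrite mulrDr mulr_sumr; under [in RHS]eq_bigr do rewrite mulrC.
by ring.
Unshelve. all: by end_near.
Qed.

Lemma discount_half : discount 2^-1.
Proof. by apply/andP; split; lra. Qed.

Definition order_of (E : env) (J : policy E -> R) (p1 p2 : policy E) : Prop :=
  J p2 <= J p1.

Lemma order_of_total_preorder (E : env) (J : policy E -> R) :
  total_preorder (order_of E J).
Proof.
split; first by move=> p; rewrite /order_of.
split; first by move=> p1 p2 p3; rewrite /order_of => h1 h2; exact: le_trans h2 h1.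
move=> p1 p2; rewrite /order_of.
by case: (leP (J p2) (J p1)) => h; [left | right; exact: ltW].
Qed.

Lemma induced_order_of_eq {E : env} {J J' : policy E -> R} :
  Defs.induced J (order_of E J') -> forall p q, J' p = J' q -> J p = J q.
Proof.
move=> JJ' p q epq; apply/le_anti/andP; split; [apply/(JJ' q p) | apply/(JJ' p q)];
  by rewrite /order_of epq.
Qed.

Lemma induced_order_of_lt {E : env} {J J' : policy E -> R} :
  Defs.induced J (order_of E J') -> forall p q, J' p < J' q -> J p < J q.
Proof. by move=> JJ' p q; rewrite !ltNge; apply: contra => /(JJ' p q). Qed.

Lemma J_MR_RRL (E : env) (Rw : st E -> act E -> st E -> R) gamma pi :
  J_MR Rw gamma pi = J_RRL Rw 0 (fun=> 0) gamma pi.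
Proof.
congr (exp_disc _ _ _); apply: functional_extensionality_dep => t.
by apply/funext => p; apply/funext => s'; rewrite mul0r subr0.
Qed.

Lemma pst_ord {E : env} {n} (p : Defs.path E n) (i : 'I_n.+1) : pst p i = p.1 i.
Proof. by rewrite /pst inord_val. Qed.

Lemma pact_ord {E : env} {n} (p : Defs.path E n) (i : 'I_n.+1) : pact p i = p.2 i.
Proof. by rewrite /pact inord_val. Qed.

(** * Cylinder covers and the trajectory outer measure *)

Section TrajectoryOuterMeasure.
Variables (E : env) (pi : policy E).
Local Notation S := (st E).
Local Notation A := (act E).
Local Notation node := (nat -> S * A).

(* A node of depth [n] in the tree of trajectory prefixes is represented by
   any [f : node]; only [f 0], ..., [f n] are relevant. *)
Definition prefix_prob n (f : node) : R :=
  @init E (f 0%N).1 * \prod_(i < n.+1) pi (f i).1 (f i).2 *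
  \prod_(i < n) trans (f i).1 (f i).2 (f i.+1).1.

Definition path_node {n} (p : Defs.path E n) : node := fun k => (pst p k, pact p k).

Definition traj_node (xi : traj E) : node := fun k => (tst xi k, tact xi k).

Lemma path_probE n (p : Defs.path E n) : path_prob pi p = prefix_prob n (path_node p).
Proof. by []. Qed.

Definition agree n (f g : node) := forall k, (k <= n)%N -> f k = g k.

Lemma cylE n (p : Defs.path E n) xi : cyl p xi <-> agree n (traj_node xi) (path_node p).
Proof. by split=> h k /h; rewrite /traj_node /path_node pair_equal_spec. Qed.

Lemma prefix_prob_ge0 n f : 0 <= prefix_prob n f.
Proof.
by rewrite !mulr_ge0 ?dist_ge0 //; apply: prodr_ge0 => i _; exact: dist_ge0.
Qed.

Lemma prefix_prob_agree {n f g} : agree n f g -> prefix_prob n f = prefix_prob n g.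
Proof.
move=> fg; rewrite /prefix_prob fg //; congr (_ * _ * _); apply: eq_bigr => i _.
  by rewrite fg // -ltnS.
by rewrite !fg // ltnW.
Qed.

Definition child n (f : node) (x : S * A) : node :=
  fun k => if k == n.+1 then x else f k.

Lemma agree_child n f x : agree n f (child n f x).
Proof. by move=> k kn; rewrite /child ltn_eqF. Qed.

Lemma agree_child_le {m n f x g} :
  (m <= n)%N -> agree m (child n f x) g <-> agree m f g.
Proof.
move=> mn; split=> fg k km; rewrite -fg //; have kn := leq_trans km mn.
  exact: agree_child.
by rewrite -agree_child.
Qed.

Lemma agree_childE n f x g :
  agree n.+1 (child n f x) g <-> agree n f g /\ x = g n.+1.
Proof.
rewrite /child; split=> [fg | [fg ->] k].
  split; last by have := fg _ (leqnn _); rewrite eqxx.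
  by move=> k kn; rewrite -fg ?ltn_eqF // leqW.
by rewrite leq_eqVlt; case: eqP => [-> //|_ /= /fg].
Qed.

Lemma prefix_probS n f : prefix_prob n.+1 f =
  prefix_prob n f * trans (f n).1 (f n).2 (f n.+1).1 * pi (f n.+1).1 (f n.+1).2.
Proof. by rewrite /prefix_prob !big_ord_recr /=; ring. Qed.

Lemma prefix_prob_child n f x : prefix_prob n.+1 (child n f x) =
  prefix_prob n f * trans (f n).1 (f n).2 x.1 * pi x.1 x.2.
Proof.
rewrite prefix_probS -(prefix_prob_agree (agree_child n f x)).
by rewrite /child eqxx ltn_eqF.
Qed.

Lemma sum_prefix_prob_child n f :
  \sum_x prefix_prob n.+1 (child n f x) = prefix_prob n f.
Proof.
under eq_bigr do rewrite prefix_prob_child.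
rewrite -(pair_bigA _ (fun s a => prefix_prob n f * trans (f n).1 (f n).2 s * pi s a)) /=.
under eq_bigr do rewrite -mulr_sumr dist_sum1 mulr1.
by rewrite -mulr_sumr dist_sum1 mulr1.
Qed.

Local Notation cylinder := (option {m : nat & Defs.path E m}).

(* The mass that the cylinder [ocyl c] puts below the node [f] of depth [n]. *)
Definition cyl_mass (c : cylinder) n (f : node) : R :=
  if c is Some (existT m p) then
    if (m <= n)%N then (if `[< agree m f (path_node p) >] then prefix_prob n f else 0)
    else if `[< agree n f (path_node p) >] then path_prob pi p else 0
  else 0.

Lemma ocyl_prob_ge0 c : 0 <= ocyl_prob pi c.
Proof. by case: c => [[m p]|] //=; rewrite path_probE prefix_prob_ge0. Qed.

Lemma cyl_mass_ge0 c n f : 0 <= cyl_mass c n f.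
Proof.
case: c => [[m p]|] //=.
by case: ifP => _; case: asboolP => _; rewrite ?path_probE ?prefix_prob_ge0.
Qed.

Lemma sum_child_if n f g (X : R) :
  \sum_x (if `[< agree n.+1 (child n f x) g >] then X else 0) =
  if `[< agree n f g >] then X else 0.
Proof.
case: asboolP => fg.
  by apply: (sum_if_unique _ (g n.+1)) => x; rewrite agree_childE; tauto.
by rewrite big1 // => x _; case: asboolP => // /agree_childE[].
Qed.

Lemma cyl_mass_children c n f :
  cyl_mass c n f = \sum_x cyl_mass c n.+1 (child n f x).
Proof.
case: c => [[m p]|]; last by rewrite big1.
rewrite /cyl_mass; case: (leqP m n) => [mn | nm].
  rewrite (leqW mn).
  under eq_bigr do rewrite (asbool_equiv_eq (agree_child_le mn)).
  by case: asboolP => _; rewrite ?sum_prefix_prob_child // big1.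
rewrite -sum_child_if; apply: eq_bigr => x _; case: leqP => // mn.
have -> : n.+1 = m by apply/eqP; rewrite eqn_leq nm mn.
by case: asboolP => // h; rewrite path_probE (prefix_prob_agree h).
Qed.

Lemma sum_cyl_mass_root c : \sum_x cyl_mass c 0 (fun=> x) = ocyl_prob pi c.
Proof.
case: c => [[m p]|]; last by rewrite big1.
rewrite [RHS]/= -[RHS](sum_if_unique (fun x => agree 0 (fun=> x) (path_node p))
  (path_node p 0) (path_prob pi p)).
  apply: eq_bigr => x _; rewrite /cyl_mass; case: m p => [|m] p //=.
  by case: asboolP => // h; rewrite path_probE (prefix_prob_agree h).
by move=> x; split=> [/(_ 0%N) -> // | -> k]; rewrite leqn0 => /eqP ->.
Qed.

Definition cover_mass (c : nat -> cylinder) n f : \bar R :=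
  \sum_(k <oo) (cyl_mass (c k) n f)%:E.

Lemma cover_mass_ge0 c n f : (0 <= cover_mass c n f)%E.
Proof. by apply: nneseries_ge0 => k _ _; rewrite lee_fin cyl_mass_ge0. Qed.

Lemma cover_mass_children c n f :
  cover_mass c n f = (\sum_x cover_mass c n.+1 (child n f x))%E.
Proof.
rewrite /cover_mass -nneseries_sum => [|x k _]; last by rewrite lee_fin cyl_mass_ge0.
by apply: eq_eseriesr => k _; rewrite cyl_mass_children sumEFin.
Qed.

Lemma sum_cover_mass_root c :
  (\sum_x cover_mass c 0 (fun=> x) = \sum_(k <oo) (ocyl_prob pi (c k))%:E)%E.
Proof.
rewrite /cover_mass -nneseries_sum => [|x k _]; last by rewrite lee_fin cyl_mass_ge0.
by apply: eq_eseriesr => k _; rewrite sumEFin sum_cyl_mass_root.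
Qed.

Section Potential.
Variable V : nat -> node -> R.
Hypothesis V_agree : forall n f g, agree n f g -> V n f = V n g.
Hypothesis V_le_children : forall n f, V n f <= \sum_x V n.+1 (child n f x).
Hypothesis V_le_prefix_prob : forall n f, V n f <= prefix_prob n f.

(* If the cover had less mass than [V] below [f0], some child of [f0] would
   inherit this defect; following such children forever yields a trajectory
   along which [V] stays positive, but the cylinder covering it carries at
   least the whole [prefix_prob] of its prefix. *)
Lemma cover_mass_ge_potential (c : nat -> cylinder) f0 :
  (forall xi, (forall n, 0 < V n (traj_node xi)) -> exists k, ocyl (c k) xi) ->
  ((V 0 f0)%:E <= cover_mass c 0 f0)%E.
Proof.
move=> V_covered; rewrite leNgt; apply/negP => bad0.
pose bad n f := (cover_mass c n f < (V n f)%:E)%E.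
have bad_child n f : bad n f -> exists x, bad n.+1 (child n f x).
  move=> bnf; have [//|nobad] := pselect (exists x, bad n.+1 (child n f x)).
  exfalso; move: bnf.
  rewrite /bad cover_mass_children ltNge => /negP; apply.
  apply: (@le_trans _ _ (\sum_x (V n.+1 (child n f x))%:E)%E).
    by rewrite sumEFin lee_fin.
  by apply: lee_sum => x _; rewrite leNgt; apply/negP => ?; apply: nobad; exists x.
have [next nextP] : {next : nat * node -> S * A &
    forall nf, bad nf.1 nf.2 -> bad nf.1.+1 (child nf.1 nf.2 (next nf))}.
  apply: (@boolp.choice _ _ (fun nf x =>
    bad nf.1 nf.2 -> bad nf.1.+1 (child nf.1 nf.2 x))).
  move=> [n f]; have [/bad_child[x bx]|] := pselect (bad n f).
    by exists x.
  by exists (f0 0%N).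
pose fix branch j :=
  if j is j'.+1 then child j' (branch j') (next (j', branch j')) else f0.
have branch_bad j : bad j (branch j) by elim: j => [|j IH] //; exact: (nextP (j, _) IH).
have branch_agree j d : agree j (branch j) (branch (j + d)%N).
  elim: d => [|d IH] k kj; first by rewrite addn0.
  by rewrite IH // addnS; apply: agree_child; exact: leq_trans kj (leq_addr d j).
pose xi := Traj (fun k => (branch k k).1) (fun k => (branch k k).2).
have xi_agree j : agree j (branch j) (traj_node xi).
  move=> k kj; rewrite /traj_node /= -surjective_pairing.
  by rewrite (branch_agree k (j - k)%N) ?subnKC.
have [k] : exists k, ocyl (c k) xi.
  apply: V_covered => n; rewrite -(V_agree _ _ _ (xi_agree n)) -lte_fin.
  exact: le_lt_trans (cover_mass_ge0 _ _ _) (branch_bad n).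
case ck: (c k) => [[m p]|] //= /cylE xi_p.
have := branch_bad m; rewrite /bad ltNge => /negP; apply.
apply: le_trans (nneseries_ge_term _ k _) => [|i]; last by rewrite lee_fin cyl_mass_ge0.
rewrite /cyl_mass ck leqnn lee_fin.
case: asboolP => [_|[]]; first exact: V_le_prefix_prob.
by move=> i im; rewrite xi_agree // xi_p.
Qed.

Lemma traj_prob_ge_potential (B : set (traj E)) :
  (forall xi, (forall n, 0 < V n (traj_node xi)) -> B xi) ->
  ((\sum_x V 0 (fun=> x))%:E <= traj_prob pi B)%E.
Proof.
move=> V_B; apply: le_ereal_inf_tmp => _ [c Bc <-].
rewrite -sum_cover_mass_root -sumEFin; apply: lee_sum => x _.
by apply: cover_mass_ge_potential => xi /V_B /Bc [k _ xi_k]; exists k.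
Qed.

End Potential.

End TrajectoryOuterMeasure.

(** * The witness environment *)

Lemma card_bool_gt0 : (0 < #|{: bool}|)%N. Proof. by rewrite card_bool. Qed.

Definition env0 : env := Env card_bool_gt0 card_bool_gt0
  (fun _ _ => point_dist bool true) (point_dist bool false).

Definition state_at (t : nat) : bool := (t != 0)%N.

Definition J_tf (pi : policy env0) : R := pi true true * pi true false.

Lemma path_prob_env0 (pi : policy env0) n (p : Defs.path env0 n) :
  path_prob pi p = \prod_(i < n.+1) ((p.1 i == state_at i)%:R * pi (p.1 i) (p.2 i)).
Proof.
rewrite /path_prob big_split /= mulrAC; congr (_ * _); last first.
  by apply: eq_bigr => i _; rewrite pst_ord pact_ord.
rewrite big_ord_recl /= point_distE -(pst_ord p ord0); congr (_ * _).
apply: eq_bigr => i _; rewrite point_distE /pst; congr ((p.1 _ == _)%:R).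
by apply/val_inj; rewrite /= inordK // ltnS.
Qed.

Lemma expect_prod_env0 (pi : policy env0) n (h : nat -> bool -> bool -> R) :
  \sum_(p : Defs.path env0 n) path_prob pi p * \prod_(i < n.+1) h i (p.1 i) (p.2 i)
  = \prod_(i < n.+1) \sum_a pi (state_at i) a * h i (state_at i) a.
Proof.
under eq_bigr do rewrite path_prob_env0 -big_split /=.
rewrite -(pair_bigA _ (fun (fs fa : {ffun 'I_n.+1 -> bool}) =>
  \prod_i ((fs i == state_at i)%:R * pi (fs i) (fa i) * h i (fs i) (fa i)))) /=.
under eq_bigr => fs _ do rewrite -(bigA_distr_bigA (fun (i : 'I_n.+1) a =>
  (fs i == state_at i)%:R * pi (fs i) a * h i (fs i) a)).
rewrite -(bigA_distr_bigA (fun (i : 'I_n.+1) s =>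
  \sum_a (s == state_at i)%:R * pi s a * h i s a)).
apply: eq_bigr => i _; rewrite big_bool -big_split /=.
by case: (state_at i); apply: eq_bigr => a _; rewrite /= ?mul1r !mul0r ?addr0 ?add0r.
Qed.

Lemma expect_at_env0 (pi : policy env0) t (g : bool -> bool -> R) :
  \sum_(p : Defs.path env0 t) path_prob pi p * g (pst p t) (pact p t)
  = \sum_a pi (state_at t) a * g (state_at t) a.
Proof.
pose h i s a := if (i == t)%N then g s a else 1.
have gE (p : Defs.path env0 t) :
    g (pst p t) (pact p t) = \prod_(i < t.+1) h i (p.1 i) (p.2 i).
  rewrite (bigD1 ord_max) //= big1 ?mulr1; last first.
    by move=> i; rewrite -val_eqE /h => /negbTE ->.
  by rewrite /h /= eqxx -(pst_ord p ord_max) -(pact_ord p ord_max).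
under eq_bigr do rewrite gE.
rewrite expect_prod_env0 (bigD1 ord_max) //= [X in _ * X]big1 ?mulr1; last first.
  move=> i; rewrite -val_eqE /h => /negbTE ->.
  by under eq_bigr do rewrite mulr1; exact: dist_sum1.
by apply: eq_bigr => a _; rewrite /h /= eqxx.
Qed.

Lemma exp_disc_env0 (pi : policy env0) gamma (g : bool -> bool -> bool -> R) :
  discount gamma ->
  exp_disc pi gamma (fun t p s' => g (pst p t) (pact p t) s') =
  \sum_a pi false a * g false a true +
  (\sum_a pi true a * g true a true) * (gamma / (1 - gamma)).
Proof.
move=> gamma01; rewrite -lim_discounted_head_tail //; congr (limn _).
apply/funext => N; apply: eq_bigr => t _; congr (_ * _).
rewrite (expect_at_env0 pi t (fun s a => \sum_s' @trans env0 s a s' * g s a s')).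
case: t => [|t]; apply: eq_bigr => a _;
  by rewrite big_bool /= !point_distE mul1r mul0r addr0.
Qed.

Lemma J_RRL_env0 Rw alpha F gamma (pi : policy env0) : discount gamma ->
  J_RRL Rw alpha F gamma pi =
  \sum_a pi false a * (Rw false a true - alpha * F (pi false)) +
  (\sum_a pi true a * (Rw true a true - alpha * F (pi true))) * (gamma / (1 - gamma)).
Proof. exact: (exp_disc_env0 pi gamma (fun s a s' => Rw s a s' - alpha * F (pi s))). Qed.

Definition policy_of (d0 d1 : dist bool) : policy env0 := fun s => if s then d1 else d0.

(* With [b0], [b1], [bh] the point masses at [false], [true] and their
   midpoint, [J_tf] cannot tell apart [b0], [b1], [bh] in state [false], nor
   [b0], [b1] in state [true].  For an RRL objective the first fact forces
   [alpha * F bh = (alpha * F b0 + alpha * F b1) / 2], which makes the value of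
   [bh] in state [true] the average of those of [b0] and [b1]; but [J_tf]
   strictly prefers [bh] there. *)
Lemma not_in_Ord_RRL : ~ in_Ord_RRL (order_of env0 J_tf).
Proof.
case=> Rw [alpha [F [gamma [gamma01 J_induces]]]].
set J := J_RRL Rw alpha F gamma in J_induces.
pose b0 := point_dist bool false; pose b1 := point_dist bool true.
have J_tf_b0 d : J_tf (policy_of d b0) = 0 by rewrite /J_tf /= !ffunE mul0r.
have J_tf_b1 d : J_tf (policy_of d b1) = 0 by rewrite /J_tf /= !ffunE mulr0.
have J_tf_bh d : J_tf (policy_of d uniform_bool) = 2^-1 * 2^-1 by rewrite /J_tf /= !ffunE.
have eqJ d0 d1 d0' d1' : J_tf (policy_of d0 d1) = J_tf (policy_of d0' d1') ->
    J (policy_of d0 d1) = J (policy_of d0' d1').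
  exact: (induced_order_of_eq J_induces).
have Jb1b0 := eqJ b1 b0 b0 b0 (etrans (J_tf_b0 _) (esym (J_tf_b0 _))).
have Jbhb0 := eqJ uniform_bool b0 b0 b0 (etrans (J_tf_b0 _) (esym (J_tf_b0 _))).
have Jb0b1 := eqJ b0 b1 b0 b0 (etrans (J_tf_b1 _) (esym (J_tf_b0 _))).
have Jb0bh : J (policy_of b0 b0) < J (policy_of b0 uniform_bool).
  apply: (induced_order_of_lt J_induces).
  by rewrite J_tf_b0 J_tf_bh mulr_gt0 // invr_gt0 ltr0n.
move: Jb1b0 Jbhb0 Jb0b1 Jb0bh; rewrite /J !J_RRL_env0 // !big_bool /= !ffunE /=.
set K := gamma / (1 - gamma).
set f0 := alpha * F b0; set f1 := alpha * F b1; set fh := alpha * F uniform_bool.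
set r10 := Rw true false true; set r11 := Rw true true true.
move=> Jb1b0 Jbhb0 Jb0b1 Jb0bh.
have fh_mid : fh = (f0 + f1) / 2 by lra.
have bh_mid : (2^-1 * (r11 - fh) + 2^-1 * (r10 - fh)) * K =
    ((r11 - f1) * K + (r10 - f0) * K) / 2 by rewrite fh_mid; field.
lra.
Qed.

Lemma not_in_Ord_MR : ~ in_Ord_MR (order_of env0 J_tf).
Proof.
case=> Rw [gamma [gamma01 J_induces]]; apply: not_in_Ord_RRL.
exists Rw, 0, (fun=> 0), gamma; split=> // p1 p2.
by rewrite -!J_MR_RRL.
Qed.

Definition reward_tt (s : st env0) (a : act env0) (s' : st env0) : R := (s && a)%:R.

Lemma J_MR_reward_tt (pi : policy env0) : J_MR reward_tt 2^-1 pi = pi true true.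
Proof.
rewrite J_MR_RRL J_RRL_env0; last exact: discount_half.
rewrite !big_bool /reward_tt /=.
have -> : 2^-1 / (1 - 2^-1) = 1 :> R by field.
by rewrite !mul0r !subr0 !mulr0 !mulr1 !add0r addr0.
Qed.

Lemma J_ONMR_env0 (pi : policy env0) :
  J_ONMR reward_tt (fun x => x * (1 - x)) 2^-1 pi = J_tf pi.
Proof.
rewrite /J_ONMR J_MR_reward_tt /J_tf; congr (_ * _).
by have := dist_bool_sum (pi true); lra.
Qed.

(* Machine states: [(false, false)] at time 0, [(false, true)] at time 1,
   [(true, a_1)] at time 2 and [(true, false)] afterwards. *)
Definition rm_init : bool * bool := (false, false).

Definition rm_step (u : bool * bool) (s : st env0) (a : act env0)
    (s' : st env0) : bool * bool :=
  if u.1 then (true, false) else if u.2 then (true, a) else (false, true).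

Definition rm_reward (u u' : bool * bool) (s : st env0) (a : act env0)
    (s' : st env0) : R :=
  ((u == (true, true)) && ~~ a)%:R.

Lemma rm_state_ne2 {n} (p : Defs.path env0 n) t :
  t != 2%N -> rm_state rm_init rm_step p t != (true, true).
Proof.
have late k : rm_state rm_init rm_step p k.+3 = (true, false) by elim: k => //= k ->.
by case: t => [|[|[|t]]] //; rewrite late.
Qed.

Lemma J_RM_env0 gamma (pi : policy env0) :
  J_RM rm_init rm_step rm_reward gamma pi = gamma ^+ 2 * J_tf pi.
Proof.
have term t : gamma ^+ t * \sum_(p : Defs.path env0 t) path_prob pi p *
    \sum_s' trans (pst p t) (pact p t) s' *
    (let u := rm_state rm_init rm_step p t in
     rm_reward u (rm_step u (pst p t) (pact p t) s') (pst p t) (pact p t) s') =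
    if t == 2%N then gamma ^+ 2 * J_tf pi else 0.
  have [->|t2] := eqVneq t 2%N; last first.
    rewrite big1 ?mulr0 // => p _; rewrite big1 ?mulr0 // => s' _.
    by rewrite /rm_reward /= (negbTE (rm_state_ne2 p t t2)) mulr0.
  congr (_ * _); under eq_bigr do rewrite sum_dist_mulr.
  pose h i (s a : bool) : R :=
    if i == 1%N then a%:R else if i == 2%N then (~~ a)%:R else 1.
  transitivity (\sum_(p : Defs.path env0 2) path_prob pi p *
      \prod_(i < 3) h i (p.1 i) (p.2 i)).
    apply: eq_bigr => p _; rewrite !big_ord_recl big_ord0 /h /= mul1r mulr1.
    rewrite /rm_reward /rm_step /rm_init /pact /=.
    have -> : (inord 1%N : 'I_3) = lift ord0 ord0 by apply/val_inj; rewrite /= inordK.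
    have -> : (inord 2%N : 'I_3) = lift ord0 (lift ord0 ord0).
      by apply/val_inj; rewrite /= inordK.
    by case: (p.2 _); case: (p.2 _); rewrite /= ?mulr1 ?mulr0.
  rewrite expect_prod_env0 !big_ord_recl big_ord0 /h /= !big_bool /= /J_tf.
  by rewrite !mulr1 !mulr0 addr0 add0r dist_bool_sum mul1r.
rewrite /J_RM /exp_disc; apply: (lim_near_cst (@Rhausdorff R)); near=> N.
under eq_bigr do rewrite term.
rewrite -big_mkcond big_nat1_eq /=.
have -> // : (2 < N)%N by near: N; exists 3%N.
Unshelve. all: by end_near.
Qed.

(** * The probability of the LTL specification *)

Definition phi0 : ltl env0 :=
  LAnd (LNext (LAtom (true : st env0) (true : act env0) (true : st env0)))
       (LNext (LNext (LAtom (true : st env0) (false : act env0) (true : st env0)))).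

Definition tf_prefix (s0 a0 : bool) : Defs.path env0 2 :=
  ([ffun i : 'I_3 => if i == 0%N :> nat then s0 else true],
   [ffun i : 'I_3 => if i == 0%N :> nat then a0 else i == 1%N :> nat]).

Definition tf_cover (k : nat) : option {m : nat & Defs.path env0 m} :=
  match k with
  | 0 => Some (existT _ 2%N (tf_prefix false false))
  | 1 => Some (existT _ 2%N (tf_prefix false true))
  | 2 => Some (existT _ 2%N (tf_prefix true false))
  | 3 => Some (existT _ 2%N (tf_prefix true true))
  | _ => None
  end.

Lemma path_prob_tf_prefix (pi : policy env0) s0 a0 :
  path_prob pi (tf_prefix s0 a0) = (~~ s0)%:R * pi false a0 * J_tf pi.
Proof.
rewrite path_prob_env0 !big_ord_recl big_ord0 /= !ffunE /= mulr1 /J_tf.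
by case: s0; rewrite /= ?mul0r ?mul1r //; ring.
Qed.

Lemma phi0_sub_tf_cover :
  [set xi | ltl_holds phi0 xi 0] `<=` \bigcup_k ocyl (tf_cover k).
Proof.
move=> xi [[s1 [a1 s2]] [_ [a2 _]]].
have in_prefix : cyl (tf_prefix (tst xi 0) (tact xi 0)) xi.
  move=> k; rewrite /pst /pact !ffunE.
  by case: k => [|[|[|//]]] _; rewrite inordK.
case: (tst xi 0) (tact xi 0) in_prefix => -[] ?;
  [exists 3%N | exists 2%N | exists 1%N | exists 0%N] => //.
Qed.

Lemma sum_tf_cover (pi : policy env0) :
  (\sum_(k <oo) (ocyl_prob pi (tf_cover k))%:E = (J_tf pi)%:E)%E.
Proof.
rewrite (nneseries_split 0 4) => [|k _]; last by rewrite lee_fin ocyl_prob_ge0.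
rewrite eseries0 ?adde0; last by case=> [|[|[|[|k]]]].
rewrite sumEFin big_mkord !big_ord_recl big_ord0 /= !path_prob_tf_prefix /=.
by rewrite !mul1r !mul0r !addr0 -mulrDl addrC dist_bool_sum mul1r.
Qed.

Local Notation node0 := (nat -> st env0 * act env0).

(* [prefix_prob] times the conditional probability of [phi0] given the
   prefix of length [n + 1]. *)
Definition phi0_potential (pi : policy env0) n (f : node0) : R :=
  match n with
  | 0 => prefix_prob env0 pi 0 f * J_tf pi
  | 1 => (f 1%N == (true, true))%:R * prefix_prob env0 pi 1 f * pi true false
  | 2 => ((f 1%N == (true, true)) && (f 2%N == (true, false)))%:R *
         prefix_prob env0 pi 2 f
  | _ => [&& f 1%N == (true, true), f 2%N == (true, false) & (f 3%N).1]%:R *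
         prefix_prob env0 pi n f
  end.

Section Phi0Potential.
Variable pi : policy env0.
Local Notation V := (phi0_potential pi).

Lemma phi0_potential_agree n f g : agree env0 n f g -> V n f = V n g.
Proof.
by case: n => [|[|[|n]]] fg; rewrite /phi0_potential (prefix_prob_agree env0 pi fg) ?fg.
Qed.

Lemma prefix_prob_child_env0 n f x : prefix_prob env0 pi n.+1 (child env0 n f x) =
  x.1%:R * pi x.1 x.2 * prefix_prob env0 pi n f.
Proof. by rewrite prefix_prob_child /= point_distE eqb_id; ring. Qed.

Lemma phi0_potential_children n f : V n f = \sum_x V n.+1 (child env0 n f x).
Proof.
have pi_true := dist_bool_sum (pi true).
case: n => [|[|[|n]]]; rewrite /phi0_potential;
  under eq_bigr do rewrite prefix_prob_child_env0 /child /=.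
- by rewrite sum_bool_pair /J_tf /=; ring.
- by rewrite sum_bool_pair; case: (_ == _); rewrite /= ?eqxx /=; ring.
- rewrite sum_bool_pair; case: (f 1%N == _); case: (f 2%N == _) => /=; try ring.
  by rewrite (_ : pi true false = 1 - pi true true); [ring | lra].
- rewrite -[in LHS](sum_prefix_prob_child env0 pi n.+3 f) mulr_sumr.
  by apply: eq_bigr => x _; rewrite prefix_prob_child_env0.
Qed.

Lemma phi0_potential_le n f : V n f <= prefix_prob env0 pi n f.
Proof.
have pp_ge0 m : 0 <= prefix_prob env0 pi m f := prefix_prob_ge0 env0 pi m f.
have ind_le (b : bool) (r : R) : 0 <= r -> b%:R * r <= r.
  by case: b; rewrite ?mul1r ?mul0r.
case: n => [|[|[|n]]] /=; rewrite ?ind_le //.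
  by rewrite ler_piMr // mulr_ile1 ?dist_ge0 ?dist_le1.
apply: le_trans (ind_le (f 1%N == (true, true)) _ (pp_ge0 1%N)).
by rewrite ler_piMr ?dist_le1 // mulr_ge0 ?ler0n.
Qed.

Lemma phi0_of_potential_pos xi :
  (forall n, 0 < V n (traj_node env0 xi)) -> ltl_holds phi0 xi 0.
Proof.
move=> /(_ 3%N); rewrite /phi0_potential /traj_node.
case: and3P => [[/eqP t1 /eqP t2 s3] _ | _]; last by rewrite mul0r ltxx.
by case: t1 t2 s3 => s1 a1 [s2 a2] /= s3; rewrite s1 a1 s2 a2 s3.
Qed.

Lemma sum_phi0_potential_root : \sum_x V 0 (fun=> x) = J_tf pi.
Proof.
rewrite -mulr_suml /prefix_prob sum_bool_pair /= !big_ord1 !big_ord0 !point_distE /=.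
by rewrite !mulr1 !mul0r !mul1r !add0r dist_bool_sum mul1r.
Qed.

End Phi0Potential.

Lemma J_LTL_env0 (pi : policy env0) : J_LTL phi0 pi = J_tf pi.
Proof.
rewrite /J_LTL; have -> // : traj_prob pi [set xi | ltl_holds phi0 xi 0] = (J_tf pi)%:E.
apply/le_anti/andP; split.
  apply: ereal_inf_lbound; exists tf_cover; first exact: phi0_sub_tf_cover.
  exact: sum_tf_cover.
rewrite -sum_phi0_potential_root.
apply: traj_prob_ge_potential => [n f g | n f | n f | xi].
- exact: phi0_potential_agree.
- by rewrite -phi0_potential_children.
- exact: phi0_potential_le.
- exact: phi0_of_potential_pos.
Qed.

Theorem mainTheorem11 :
  exists (E : env) (rel : policy E -> policy E -> Prop),
    total_preorder rel /\
    in_Ord_RM rel /\ in_Ord_ONMR rel /\ in_Ord_LTL rel /\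
    ~ in_Ord_MR rel /\ ~ in_Ord_RRL rel.
Proof.
exists env0, (order_of env0 J_tf); split; first exact: order_of_total_preorder.
split.
  exists _, rm_init, rm_step, rm_reward, 2^-1; split; first exact: discount_half.
  by move=> p1 p2; rewrite /order_of !J_RM_env0 ler_pM2l // exprn_gt0.
split.
  exists reward_tt, (fun x => x * (1 - x)), 2^-1; split; first exact: discount_half.
  by move=> p1 p2; rewrite /order_of !J_ONMR_env0.
split; first by exists phi0 => p1 p2; rewrite /order_of !J_LTL_env0.
split; [exact: not_in_Ord_MR | exact: not_in_Ord_RRL].
Qed.
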